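(* Let $G$ be a graph, $k,\ell\ge1$, $S$ an independent set of size $k$, and $J_0=S,J_1,\dots,J_\ell$ independent sets of $G$. Define $\mathcal{C}_0=\{\{(S,k)\}\}$ and, for $i\in\{1,\dots,\ell\}$, let $\mathcal{C}_i$ contain, for every $C\in\mathcal{C}_{i-1}$ and every constraint $(X,b)\in C$, the constraint set $C'$ consisting of: $(N(X)\cap J_i,1)$; $(X\cap J_i,b-1)$ if $b\ge2$ (nothing if $b=1$); and $(X'\cap J_i,b')$ for every other constraint $(X',b')\in C$. Then for every $i\in\{0,\dots,\ell\}$, $\sum_{C\in\mathcal{C}_i}|C|\le (i+1)!$; in particular $\sum_{C\in\mathcal{C}_\ell}|C|\le(\ell+1)!$.
   Context: A constraint is a pair $(X,b)$ with $X\subseteq V(G)$ and $b$ a positive integer; a constraint set is a finite collection of constraints. The collections $\mathcal{C}_i$ and constraint sets are taken with multiplicity (one $C'$ per pair $(C,(X,b))$), and $|C|$ is the number of constraints in $C$. For $X\subseteq V(G)$, $N(X)=\{v\notin X: v\text{ adjacent to some }u\in X\}$. *)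

From mathcomp Require Import all_boot.
Set Implicit Arguments. Unset Strict Implicit. Unset Printing Implicit Defensive.

Definition simple_graph (T : finType) (e : rel T) : Prop :=
  symmetric e /\ irreflexive e.

Definition independent (T : finType) (e : rel T) (A : {set T}) : bool :=
  [forall u in A, forall v in A, ~~ e u v].

Definition nbh (T : finType) (e : rel T) (X : {set T}) : {set T} :=
  [set v | (v \notin X) && [exists u in X, e u v]].

Definition constraint (T : finType) := ({set T} * nat)%type.

(* Constraint sets are taken with multiplicity: lists of constraints. *)
Definition cset (T : finType) := seq (constraint T).

(* The constraint set C' obtained from C by branching on the constraint c,
   where [others] is C with (one copy of) c removed. *)
Definition branch (T : finType) (e : rel T) (Ji : {set T})
    (c : constraint T) (others : cset T) : cset T :=
  (nbh e c.1 :&: Ji, 1)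
    :: (if 2 <= c.2 then [:: (c.1 :&: Ji, c.2.-1)] else [::])
    ++ [seq (c'.1 :&: Ji, c'.2) | c' <- others].

Definition step (T : finType) (e : rel T) (Ji : {set T})
    (Cs : seq (cset T)) : seq (cset T) :=
  flatten [seq [seq branch e Ji c (rem c C) | c <- C] | C <- Cs].

Fixpoint Ccol (T : finType) (e : rel T) (J : nat -> {set T}) (S : {set T})
    (k : nat) (i : nat) : seq (cset T) :=
  match i with
  | 0 => [:: [:: (S, k)]]
  | i'.+1 => step e (J i) (Ccol e J S k i')
  end.

Definition total_size (T : finType) (Cs : seq (cset T)) : nat :=
  sumn [seq size C | C <- Cs].

From mathcomp Require Import all_boot.

Set Implicit Arguments.
Unset Strict Implicit.
Unset Printing Implicit Defensive.

(* Branching on a constraint of a constraint set with s constraints yields a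
   set with at most s + 1 constraints: the new neighbourhood constraint, the
   decremented constraint, and the s - 1 restricted others.  Hence every set
   of C_i has at most i + 1 constraints, and passing from C_i to C_(i+1) each
   C spawns |C| sets of size at most i + 2, so the total size grows by a
   factor at most i + 2.  The graph, the independence of the J_i and the
   value of k play no role in this count. *)

Section Step.

Variables (T : finType) (e : rel T) (Ji : {set T}).

Lemma total_sizeE (Cs : seq (cset T)) : total_size Cs = \sum_(C <- Cs) size C.
Proof. by rewrite /total_size sumnE big_map. Qed.

Lemma size_branch (c : constraint T) (others : cset T) :
  size (branch e Ji c others) <= (size others).+2.
Proof. by rewrite /= size_cat size_map; case: ifP. Qed.

Lemma size_branch_rem (c : constraint T) (C : cset T) :
  c \in C -> size (branch e Ji c (rem c C)) <= (size C).+1.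
Proof.
move=> cC; have C_gt0 : 0 < size C by case: C cC.
by have := size_branch c (rem c C); rewrite size_rem // prednK.
Qed.

Lemma size_step_le (Cs : seq (cset T)) n :
  all (fun C => size C <= n) Cs -> all (fun C => size C <= n.+1) (step e Ji Cs).
Proof.
move=> /allP Cs_le; apply/all_allpairsP => C c CCs cC.
by apply: leq_trans (size_branch_rem cC) _; rewrite ltnS Cs_le.
Qed.

Lemma total_size_step_le (Cs : seq (cset T)) n :
  all (fun C => size C <= n) Cs -> total_size (step e Ji Cs) <= n.+1 * total_size Cs.
Proof.
move=> /allP Cs_le.
rewrite !total_sizeE big_flatten big_map big_distrr /= !big_seq.
apply: leq_sum => C CCs; rewrite big_map.
have -> : n.+1 * size C = \sum_(c <- C) n.+1.
  by rewrite big_const_seq count_predT iter_addn_0 mulnC.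
rewrite !big_seq; apply: leq_sum => c cC.
by apply: leq_trans (size_branch_rem cC) _; rewrite ltnS Cs_le.
Qed.

End Step.

Section Collections.

Variables (T : finType) (e : rel T) (J : nat -> {set T}) (S : {set T}) (k : nat).

Lemma size_Ccol_le i : all (fun C => size C <= i.+1) (Ccol e J S k i).
Proof. by elim: i => [|i IHi] //=; apply: size_step_le. Qed.

Lemma total_size_Ccol_le i : total_size (Ccol e J S k i) <= i.+1`!.
Proof.
elim: i => [|i IHi] //=.
apply: leq_trans (total_size_step_le e (J i.+1) (size_Ccol_le i)) _.
by rewrite factS leq_mul2l IHi orbT.
Qed.

End Collections.

Theorem lemma3p4 (T : finType) (e : rel T) (k l : nat) (S : {set T})
    (J : nat -> {set T}) :
  simple_graph e ->
  1 <= k -> 1 <= l ->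
  independent e S -> #|S| = k ->
  J 0 = S ->
  (forall i, i <= l -> independent e (J i)) ->
  forall i, i <= l -> total_size (Ccol e J S k i) <= i.+1`!.
Proof. by move=> _ _ _ _ _ _ _ i _; apply: total_size_Ccol_le. Qed.
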